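(* Let $p$ be a strongly productive ultrafilter on a semigroup $S$. If $\mathrm{FP}(\vec{x})\in p$ for some sequence $\vec{x}$ in $S$ satisfying the ordered uniqueness of finite products, then $p$ is sparse (indeed multiplicatively isomorphic to an ordered union ultrafilter).
   Context: For a sequence $\vec{x}=(x_n)_{n\in\omega}$ in $S$, $\mathrm{FP}(\vec{x})$ is the set of products $\prod_{i\in a}x_i$ (increasing order of indices), $a$ a finite nonempty subset of $\omega$; $p$ is strongly productive if every $A\in p$ contains some $\mathrm{FP}(\vec{x})\in p$. $\mathbb{F}$ is the partial semigroup of finite nonempty subsets of $\omega$ with $ab=a\cup b$ defined iff $\max a<\min b$. $\vec{x}$ satisfies the ordered uniqueness of finite products if $f:\mathbb{F}\to\mathrm{FP}(\vec{x})$, $f(a)=\prod_{i\in a}x_i$, is injective and whenever $a,b\in\mathbb{F}$ satisfy $f(a)f(b)\in\mathrm{FP}(\vec{x})$, one has $\max a<\min b$. An ordered union ultrafilter is a strongly productive ultrafilter on the partial semigroup $\mathbb{F}$; $p$ is multiplicatively isomorphic to one if for some $\vec{x}$ the map $f$ above is injective and $\{f^{-1}[A]:A\in p\}$ is an ordered union ultrafilter. $p$ is sparse if for every $A\in p$ there are a sequence $\vec{x}$ in $S$ and a subsequence $\vec{y}=(x_{k_n})_n$ ($k_0<k_1<\cdots$) with $\mathrm{FP}(\vec{y})\in p$, $\mathrm{FP}(\vec{x})\subseteq A$, and $\{k_n:n\in\omega\}$ coinfinite in $\omega$. *)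

From mathcomp Require Import all_boot.
Set Implicit Arguments. Unset Strict Implicit. Unset Printing Implicit Defensive.

Definition is_ultrafilter (T : Type) (U : (T -> Prop) -> Prop) : Prop :=
  [/\ ~ U (fun _ => False),
      U (fun _ => True),
      (forall A B : T -> Prop, U A -> (forall t, A t -> B t) -> U B),
      (forall A B : T -> Prop, U A -> U B -> U (fun t => A t /\ B t)) &
      (forall A : T -> Prop, U A \/ U (fun t => ~ A t))].

(* The partial semigroup F: finite nonempty subsets of omega, represented as
   strictly increasing nonempty lists (so min a = head, max a = last). *)
Definition isF (a : seq nat) : bool := sorted ltn a && (a != [::]).
Definition Fset := {a : seq nat | isF a}.

Definition Fmin (a : seq nat) : nat := head 0 a.
Definition Fmax (a : seq nat) : nat := last 0 a.

Definition FPprod (S : Type) (op : S -> S -> S) (x : nat -> S) (a : seq nat) : S :=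
  match a with
  | [::] => x 0 (* never used: a is nonempty *)
  | i :: l => foldl (fun acc j => op acc (x j)) (x i) l
  end.

Definition FP (S : Type) (op : S -> S -> S) (x : nat -> S) : S -> Prop :=
  fun s => exists a : Fset, s = FPprod op x (val a).

Definition strongly_productive (S : Type) (op : S -> S -> S)
    (p : (S -> Prop) -> Prop) : Prop :=
  forall A : S -> Prop, p A ->
    exists x : nat -> S, p (FP op x) /\ (forall s, FP op x s -> A s).

Definition ordered_uniqueness (S : Type) (op : S -> S -> S) (x : nat -> S) : Prop :=
  (forall a b : Fset, FPprod op x (val a) = FPprod op x (val b) -> a = b) /\
  (forall a b : Fset, FP op x (op (FPprod op x (val a)) (FPprod op x (val b))) ->
     Fmax (val a) < Fmin (val b)).

(* FP in the partial semigroup F (product = union, defined iff max a < min b):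
   for a sequence y in F whose consecutive products are all defined
   (max y_n < min y_(n+1)), FP(y) is the set of unions of finitely many y_i,
   i.e. concatenations in increasing order. *)
Definition Fblock (y : nat -> Fset) : Prop :=
  forall n, Fmax (val (y n)) < Fmin (val (y n.+1)).

Definition FU (y : nat -> Fset) : Fset -> Prop :=
  fun b => exists a : Fset, val b = flatten [seq val (y i) | i <- val a].

Definition ordered_union_ultrafilter (U : (Fset -> Prop) -> Prop) : Prop :=
  is_ultrafilter U /\
  forall A : Fset -> Prop, U A ->
    exists y : nat -> Fset, Fblock y /\ U (FU y) /\ (forall b, FU y b -> A b).

Definition mult_iso_ordered_union (S : Type) (op : S -> S -> S)
    (p : (S -> Prop) -> Prop) : Prop :=
  exists x : nat -> S,
    (forall a b : Fset, FPprod op x (val a) = FPprod op x (val b) -> a = b) /\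
    ordered_union_ultrafilter
      (fun B : Fset -> Prop =>
         exists A : S -> Prop, p A /\ forall a, B a <-> A (FPprod op x (val a))).

Definition sparse (S : Type) (op : S -> S -> S) (p : (S -> Prop) -> Prop) : Prop :=
  forall A : S -> Prop, p A ->
    exists (x : nat -> S) (k : nat -> nat),
      (forall n, k n < k n.+1) /\
      p (FP op (fun n => x (k n))) /\
      (forall s, FP op x s -> A s) /\
      (forall N, exists m, N <= m /\ forall n, k n <> m).

From mathcomp Require Import all_boot.
From mathcomp Require Import zify.
From Stdlib Require Import ClassicalEpsilon.

Set Implicit Arguments.
Unset Strict Implicit.
Unset Printing Implicit Defensive.

Lemma path_last_ge (u : nat) (l : seq nat) : path ltn u l -> u <= last u l.
Proof.
elim: l u => //= v l IH u /andP[uv pv].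
exact: leq_trans (ltnW uv) (IH _ pv).
Qed.

Lemma Fmin_le_Fmax {l : seq nat} : isF l -> Fmin l <= Fmax l.
Proof. by case: l => // u l /andP[/= /path_last_ge]. Qed.

Lemma isF_neq0 (l : seq nat) : isF l -> l != [::].
Proof. by case/andP. Qed.

Lemma Fmin_cat (l1 l2 : seq nat) : l1 != [::] -> Fmin (l1 ++ l2) = Fmin l1.
Proof. by case: l1. Qed.

Lemma isF_cat (l1 l2 : seq nat) :
  isF l1 -> isF l2 -> Fmax l1 < Fmin l2 -> isF (l1 ++ l2).
Proof.
case: l1 => // u l1; case: l2 => // v l2 /andP[/= h1 _] /andP[/= h2 _] /= h3.
by rewrite /isF /= cat_path /= h1 h2 h3.
Qed.

Definition blk (a : nat -> seq nat) : Prop :=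
  (forall n, isF (a n)) /\ (forall n, Fmax (a n) < Fmin (a n.+1)).

Lemma blkF (a : nat -> Fset) : Fblock a -> blk (fun n => val (a n)).
Proof. by move=> hb; split => // n; exact: valP. Qed.

Section BlockSequences.

Variable a : nat -> seq nat.
Hypothesis ha : blk a.

Lemma blk_neq0 (n : nat) : a n != [::].
Proof. exact: isF_neq0 (ha.1 n). Qed.

Lemma blk_lt {i j : nat} : i < j -> Fmax (a i) < Fmin (a j).
Proof.
elim: j => // j IH; rewrite ltnS leq_eqVlt => /orP[/eqP-> | lt]; first exact: ha.2.
have := IH lt; have := Fmin_le_Fmax (ha.1 j); have := ha.2 j; lia.
Qed.

Lemma blk_le {i j : nat} : j <= i -> Fmin (a j) <= Fmax (a i).
Proof.
rewrite leq_eqVlt => /orP[/eqP-> | lt]; first exact: Fmin_le_Fmax (ha.1 i).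
have := blk_lt lt; have := Fmin_le_Fmax (ha.1 j); have := Fmin_le_Fmax (ha.1 i).
lia.
Qed.

Definition bunion (c : seq nat) : seq nat := flatten [seq a i | i <- c].

Lemma Fmin_bunion (c : seq nat) : c != [::] -> Fmin (bunion c) = Fmin (a (head 0 c)).
Proof. case: c => // i c _ /=; exact/Fmin_cat/blk_neq0. Qed.

Lemma Fmax_bunion (c : seq nat) : c != [::] -> Fmax (bunion c) = Fmax (a (last 0 c)).
Proof.
elim: c => // i [|j c] IH _; first by rewrite /bunion /= cats0.
move: (IH isT); rewrite /bunion /Fmax /= !last_cat => <-.
by case: (a j) (blk_neq0 j).
Qed.

Lemma isF_bunion (c : seq nat) : isF c -> isF (bunion c).
Proof.
case/andP; elim: c => // i [|j c] IH pc _.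
  by rewrite /bunion /= cats0; exact: ha.1.
apply: isF_cat; first exact: ha.1.
  exact: IH (path_sorted pc) isT.
by rewrite Fmin_cat ?blk_neq0 //; apply: blk_lt; case/andP: pc.
Qed.

Lemma bunion_inj (c c' : seq nat) :
  sorted ltn c -> sorted ltn c' -> bunion c = bunion c' -> c = c'.
Proof.
rewrite /bunion; elim: c c' => [|i c IH] [|j c'] //=.
- by case: (a j) (blk_neq0 j).
- by case: (a i) (blk_neq0 i).
move=> pc pc' E.
have eij : i = j.
  have := congr1 Fmin E; rewrite !Fmin_cat ?blk_neq0 //.
  case: (ltngtP i j) => // /blk_lt; [have := Fmin_le_Fmax (ha.1 i)
                                    | have := Fmin_le_Fmax (ha.1 j)]; lia.
subst j; rewrite (IH c' (path_sorted pc) (path_sorted pc')) //.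
by move: E; elim: (a i) => //= u l IHl [].
Qed.

End BlockSequences.

Definition Fjoin (a : nat -> Fset) (ha : Fblock a) (c : Fset) : Fset :=
  exist _ (bunion (fun n => val (a n)) (val c)) (isF_bunion (blkF ha) (valP c)).

Lemma FU_Fjoin (a : nat -> Fset) (ha : Fblock a) (c : Fset) : FU a (Fjoin ha c).
Proof. by exists c. Qed.

Lemma FU_single (a : nat -> Fset) (n : nat) : FU a (a n).
Proof. by exists (exist _ [:: n] isT); rewrite /= cats0. Qed.

Lemma FU_pair (a : nat -> Fset) (ha : Fblock a) (i j : nat) (lt_ij : i < j) :
  FU a (exist _ (val (a i) ++ val (a j))
          (isF_cat (valP (a i)) (valP (a j)) (blk_lt (blkF ha) lt_ij))).
Proof.
have hF : isF [:: i; j] by rewrite /isF /= lt_ij.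
by exists (exist _ [:: i; j] hF); rewrite /= cats0.
Qed.

(* [adj l] counts the pairs of consecutive elements of l that are adjacent
   integers; its parity is the colouring used to produce gaps between blocks. *)
Fixpoint adjp (u : nat) (l : seq nat) : nat :=
  if l is v :: l' then (u.+1 == v) + adjp v l' else 0.
Definition adj (l : seq nat) : nat := if l is u :: l' then adjp u l' else 0.

Lemma adjp_cat (u : nat) (l1 : seq nat) (v : nat) (l2 : seq nat) :
  adjp u (l1 ++ v :: l2) = adjp u l1 + adjp v l2 + ((last u l1).+1 == v).
Proof. by elim: l1 u => [|w l1 IH] u /=; [lia | rewrite IH; lia]. Qed.

Lemma adj_cat (l1 l2 : seq nat) : l1 != [::] -> l2 != [::] ->
  adj (l1 ++ l2) = adj l1 + adj l2 + ((Fmax l1).+1 == Fmin l2).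
Proof. by case: l1 => // u l1 _; case: l2 => // v l2 _; exact: adjp_cat. Qed.

Lemma odd_adj_cat (l1 l2 : seq nat) : l1 != [::] -> l2 != [::] ->
  odd (adj (l1 ++ l2)) = odd (adj l1) (+) odd (adj l2) (+) ((Fmax l1).+1 == Fmin l2).
Proof. by move=> ne1 ne2; rewrite adj_cat // !oddD oddb. Qed.

(* Inserting the singleton {max b_n + 1} between consecutive blocks: this
   keeps a block sequence as long as consecutive blocks are separated by a gap. *)
Definition interleave (b : nat -> seq nat) (n : nat) : seq nat :=
  if odd n then [:: (Fmax (b n./2)).+1] else b n./2.

Lemma interleave_even (b : nat -> seq nat) (m : nat) : interleave b m.*2 = b m.
Proof. by rewrite /interleave odd_double doubleK. Qed.

Lemma interleave_odd (b : nat -> seq nat) (m : nat) :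
  interleave b m.*2.+1 = [:: (Fmax (b m)).+1].
Proof. by rewrite /interleave /= odd_double uphalf_double. Qed.

Lemma interleave_blk (b : nat -> seq nat) :
  blk b -> (forall n, (Fmax (b n)).+1 < Fmin (b n.+1)) -> blk (interleave b).
Proof.
move=> hb gap; split=> [n | n]; first by rewrite /interleave; case: odd; last exact: hb.1.
rewrite -[n](odd_double_half n); case: (odd n); rewrite ?add0n ?add1n.
  by rewrite interleave_odd -doubleS interleave_even; exact: gap.
by rewrite interleave_even interleave_odd /Fmax /Fmin /=.
Qed.

Section Products.

Variables (S : Type) (op : S -> S -> S).
Hypothesis op_assoc : forall a b c : S, op a (op b c) = op (op a b) c.

Lemma FP_single (x : nat -> S) (n : nat) : FP op x (x n).
Proof. by exists (exist _ [:: n] isT). Qed.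

Lemma FP_pair (x : nat -> S) (i j : nat) : i < j -> FP op x (op (x i) (x j)).
Proof.
move=> lt_ij; have hF : isF [:: i; j] by rewrite /isF /= lt_ij.
by exists (exist isF _ hF).
Qed.

Lemma FPprod_cat (x : nat -> S) (l1 l2 : seq nat) :
  l1 != [::] -> l2 != [::] ->
  FPprod op x (l1 ++ l2) = op (FPprod op x l1) (FPprod op x l2).
Proof.
case: l1 => [|i l1] // _; case: l2 => [|j l2] // _ /=.
rewrite foldl_cat /=; elim: l2 (x j) => [|k l2 IH] t //=.
by rewrite -op_assoc IH.
Qed.

Lemma FPprod_ext (x x' : nat -> S) (l : seq nat) :
  (forall n, x n = x' n) -> FPprod op x l = FPprod op x' l.
Proof.
move=> e; case: l => [|i l] /=; first exact: e.
by rewrite e; elim: l (x' i) => [|j l IH] s //=; rewrite e IH.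
Qed.

Lemma FPprod_bunion (x w : nat -> S) (a : nat -> seq nat) (c : seq nat) :
  (forall n, a n != [::]) -> (forall n, w n = FPprod op x (a n)) -> c != [::] ->
  FPprod op w c = FPprod op x (bunion a c).
Proof.
move=> ha hw; elim: c => [|i [|j c] IH] // _; first by rewrite /bunion /= cats0 hw.
rewrite (@FPprod_cat w [:: i] (j :: c)) // IH // [FPprod _ _ [:: i]]/= hw /bunion /=.
by rewrite (@FPprod_cat x (a i)) //; case: (a j) (ha j).
Qed.

Lemma FP_blocks_sub (x w : nat -> S) (a : nat -> seq nat) :
  blk a -> (forall n, w n = FPprod op x (a n)) ->
  forall s, FP op w s -> FP op x s.
Proof.
move=> ha hw s [c ->]; exists (exist isF _ (isF_bunion ha (valP c))).
exact/FPprod_bunion/isF_neq0/valP/hw/blk_neq0.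
Qed.

Lemma FPprod_Fjoin (x y : nat -> S) (a : nat -> Fset) (ha : Fblock a)
    (hy : forall n, y n = FPprod op x (val (a n))) (c : Fset) :
  FPprod op y (val c) = FPprod op x (val (Fjoin ha c)).
Proof. exact/FPprod_bunion/isF_neq0/valP/hy/blk_neq0/blkF. Qed.

Lemma FP_blocksP (x y : nat -> S) (a : nat -> Fset) (ha : Fblock a)
    (hy : forall n, y n = FPprod op x (val (a n)))
    (inj : forall b b' : Fset, FPprod op x (val b) = FPprod op x (val b') -> b = b')
    (d : Fset) :
  FP op y (FPprod op x (val d)) <-> FU a d.
Proof.
split.
  by move=> [c]; rewrite (FPprod_Fjoin ha hy) => /inj ->; exact: FU_Fjoin.
move=> [c hc]; exists c; rewrite (FPprod_Fjoin ha hy); congr FPprod; exact: hc.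
Qed.

Lemma ordered_uniqueness_blocks (x y : nat -> S) (a : nat -> Fset) (ha : Fblock a)
    (hy : forall n, y n = FPprod op x (val (a n))) :
  ordered_uniqueness op x -> ordered_uniqueness op y.
Proof.
have bl := blkF ha; move=> [inj ordered]; split.
  move=> c c'; rewrite !(FPprod_Fjoin ha hy) => /inj /(congr1 val) /= E.
  by apply: val_inj; apply: (bunion_inj bl _ _ E); [case/andP: (valP c)
                                                    | case/andP: (valP c')].
move=> c c' /(FP_blocks_sub bl hy); rewrite !(FPprod_Fjoin ha hy) => /ordered /=.
rewrite (Fmax_bunion bl (isF_neq0 (valP c))) (Fmin_bunion bl (isF_neq0 (valP c'))).
rewrite ltnNge => /negP le_ab; rewrite ltnNge; apply/negP => /(blk_le bl).
by rewrite /Fmax /Fmin in le_ab *.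
Qed.

End Products.

Section Refinement.

Variables (S : Type) (op : S -> S -> S).
Hypothesis op_assoc : forall a b c : S, op a (op b c) = op (op a b) c.
Variable p : (S -> Prop) -> Prop.
Hypothesis hp : is_ultrafilter p.
Hypothesis hsp : strongly_productive op p.

(* Every B in p contains FP(y) in p with each y_n an x-product over a block
   a_n: the y_n are in FP(x), and y_n y_(n+1) in FP(x) orders the blocks. *)
Lemma refine_blocks (x : nat -> S) (hx : ordered_uniqueness op x)
    (hFP : p (FP op x)) (B : S -> Prop) (hB : p B) :
  exists (y : nat -> S) (a : nat -> Fset),
    [/\ p (FP op y), (forall s, FP op y s -> B s),
        (forall n, y n = FPprod op x (val (a n))) & Fblock a].
Proof.
case: hp => _ _ _ hI _.
have [y [hy sub]] := hsp (hI _ _ hB hFP).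
have [a ya] : exists a : nat -> Fset, forall n, y n = FPprod op x (val (a n)).
  have mem n : exists d : Fset, y n = FPprod op x (val d).
    by have [_ [d ->]] := sub _ (FP_single op y n); exists d.
  exists (fun n => proj1_sig (constructive_indefinite_description _ (mem n))).
  by move=> n; exact: proj2_sig (constructive_indefinite_description _ (mem n)).
exists y, a; split => // [s /sub [] // | n]; apply: hx.2; rewrite -!ya.
exact: (sub _ (FP_pair op y (ltnSn n))).2.
Qed.

Lemma monochromatic_blocks (x : nat -> S) (hx : ordered_uniqueness op x)
    (hFP : p (FP op x)) (P : Fset -> bool) :
  exists (y : nat -> S) (a : nat -> Fset) (e : bool),
    [/\ p (FP op y), (forall n, y n = FPprod op x (val (a n))), Fblock a
      & forall d, FU a d -> P d = e].
Proof.
have [e [B [hB hBP]]] : exists e B, p B /\ forall d, B (FPprod op x (val d)) -> P d = e.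
  pose coloured s := exists d : Fset, s = FPprod op x (val d) /\ P d.
  case: hp => _ _ _ _ /(_ coloured) [h | h].
    by exists true, coloured; split => // d [d' [/hx.1 -> ->]].
  exists false, (fun s => ~ coloured s); split => // d hd.
  by apply/negbTE/negP => Pd; apply: hd; exists d.
have [y [a [hy sub ya ha]]] := refine_blocks hx hFP hB.
exists y, a, e; split => // d /(FP_blocksP op_assoc ha ya hx.1) /sub; exact: hBP.
Qed.

(* Colouring F by the parity of [adj] yields a block sequence with gaps: a
   monochromatic block sequence has even colour (blocks a_0 and a_2 are never
   adjacent, so a_0 ++ a_2 has colour e + e), and then consecutive blocks
   cannot be adjacent. *)
Lemma gapped_blocks (x : nat -> S) (hx : ordered_uniqueness op x) (hFP : p (FP op x)) :
  exists (y : nat -> S) (a : nat -> Fset),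
    [/\ p (FP op y), (forall n, y n = FPprod op x (val (a n))), Fblock a
      & forall n, (Fmax (val (a n))).+1 < Fmin (val (a n.+1))].
Proof.
have [y [a [e [hy ya ha mono]]]] :=
  monochromatic_blocks hx hFP (fun d => odd (adj (val d))).
have colour_pair i j (lt_ij : i < j) :
    e = e (+) e (+) ((Fmax (val (a i))).+1 == Fmin (val (a j))).
  have := mono _ (FU_pair ha lt_ij).
  by rewrite /= odd_adj_cat ?(isF_neq0 (valP _)) // (mono _ (FU_single a i))
             (mono _ (FU_single a j)).
have even_colour : e = false.
  have := colour_pair 0 2 isT; case: eqP => [adjacent | _]; last by rewrite addbb.
  have := ha 0; have := ha 1; have := Fmin_le_Fmax (valP (a 1)); lia.
exists y, a; split => // n; have := colour_pair n n.+1 (ltnSn n).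
rewrite even_colour; have := ha n; case: eqP => // not_adjacent lt_n _; lia.
Qed.

(* Sparseness: refine A to a gapped block sequence inside A and interleave
   singletons; the sequence k_n = 2n omits every odd index. *)
Theorem sparse_of_uniqueness (x : nat -> S) (hx : ordered_uniqueness op x)
    (hFP : p (FP op x)) : sparse op p.
Proof.
move=> A hA.
have [y [a [hy subA ya ha]]] := refine_blocks hx hFP hA.
have [z [b [hz zb hb gap]]] :=
  gapped_blocks (ordered_uniqueness_blocks op_assoc ha ya hx) hy.
pose c := interleave (fun n => val (b n)).
have hc : blk c := interleave_blk (blkF hb) gap.
exists (fun n => FPprod op y (c n)), (fun n => n.*2); do !split.
- by move=> n; rewrite doubleS; lia.
- case: hp => _ _ hU _ _; apply: (hU _ _ hz) => s [d ->]; exists d.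
  by apply: FPprod_ext => n; rewrite /c interleave_even zb.
- by move=> s /(FP_blocks_sub op_assoc hc (fun n => erefl)) /subA.
move=> N; exists N.*2.+1; split; first by rewrite -addnn; lia.
by move=> n /(congr1 odd); rewrite /= !odd_double.
Qed.

Definition image_filter (x : nat -> S) : (Fset -> Prop) -> Prop :=
  fun B => exists A : S -> Prop, p A /\ forall a, B a <-> A (FPprod op x (val a)).

(* When p contains FP(x) and x has unique products, the image is an ultrafilter:
   B in F corresponds to the set of x-products over members of B. *)
Lemma image_is_ultrafilter (x : nat -> S)
    (inj : forall a b : Fset, FPprod op x (val a) = FPprod op x (val b) -> a = b)
    (hFP : p (FP op x)) : is_ultrafilter (image_filter x).
Proof.
have [h0 hT hU hI hC] := hp.
pose lift B s := exists a : Fset, s = FPprod op x (val a) /\ B a.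
have liftP B a : lift B (FPprod op x (val a)) <-> B a.
  by split=> [[a' [/inj -> //]] | Ba]; exists a.
have onFP A B : p A -> (forall a, A (FPprod op x (val a)) -> B a) -> p (lift B).
  move=> hA AB; apply: (hU _ _ (hI _ _ hA hFP)) => s [As [a hs]].
  by exists a; split=> //; apply: AB; rewrite -hs.
split.
- move=> [A [hA hBA]]; apply: h0.
  by apply: hU (onFP A (fun _ => False) hA _) _ => [a /hBA | s [a [_ []]]].
- by exists (fun _ => True).
- move=> B B' [A [hA hBA]] BB'; exists (lift B'); split=> [|a]; last exact: iff_sym.
  by apply: onFP hA _ => a /hBA /BB'.
- move=> B B' [A [hA hBA]] [A' [hA' hBA']]; exists (fun t => A t /\ A' t).
  by split=> [|a]; [exact: hI | rewrite hBA hBA'].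
move=> B; case: (hC (lift B)) => h; [left | right].
  by exists (lift B); split=> // a; rewrite liftP.
by exists (fun t => ~ lift B t); split=> // a; rewrite liftP.
Qed.

Lemma image_ordered_union (x : nat -> S) (hx : ordered_uniqueness op x)
    (hFP : p (FP op x)) (B : Fset -> Prop) :
  image_filter x B ->
  exists a : nat -> Fset, Fblock a /\ image_filter x (FU a) /\ (forall b, FU a b -> B b).
Proof.
move=> [A [hA hBA]].
have [y [a [hy subA ya ha]]] := refine_blocks hx hFP hA.
have FUP := FP_blocksP op_assoc ha ya hx.1.
exists a; split=> //; split; first by exists (FP op y); split=> // d; exact: iff_sym.
by move=> b /FUP /subA /hBA.
Qed.

End Refinement.

Theorem mainTheorem16 (S : Type) (op : S -> S -> S)
    (op_assoc : forall a b c : S, op a (op b c) = op (op a b) c)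
    (p : (S -> Prop) -> Prop)
    (hp : is_ultrafilter p) (hsp : strongly_productive op p)
    (x : nat -> S) (hx : ordered_uniqueness op x) (hFP : p (FP op x)) :
  sparse op p /\ mult_iso_ordered_union op p.
Proof.
split; first exact: sparse_of_uniqueness hx hFP.
exists x; split; first exact: hx.1.
split; first exact: image_is_ultrafilter hx.1 hFP.
exact: image_ordered_union hx hFP.
Qed.
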